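(* There is a constant $c>0$ such that for every positive integer $n$, \[\tfrac54 n-c\sqrt n\;\le\; st_{\mathcal{S}}(n)\;\le\; 2n-\sqrt n .\]
   Context: For a finite set $P$ of points in the plane, no two of which share an $x$-coordinate or a $y$-coordinate, $st_{\mathcal{S}}(P)$ is the minimum of $|W|$ over finite point sets $W$ such that no two distinct points of $P\cup W$ share an $x$-coordinate or a $y$-coordinate and every axis-parallel square whose boundary contains two distinct points of $P$ has a point of $W$ in its interior (equivalently, the $L_\infty$ witness Delaunay graph $\mathrm{SG}^-(P,W)$, in which distinct $p,q\in P$ are adjacent iff some axis-parallel square with $p,q$ on its boundary has no point of $W$ in its interior, has no edges). Define $st_{\mathcal{S}}(n)=\max\{st_{\mathcal{S}}(P): |P|=n\}$, the maximum over such sets $P$ of $n$ points. *)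

From Stdlib Require Import Reals List.
Import ListNotations.
Open Scope R_scope.

Definition point : Type := (R * R)%type.

Definition general_position (S : list point) : Prop :=
  forall p q, In p S -> In q S -> p <> q -> fst p <> fst q /\ snd p <> snd q.

Definition in_closed_square (a b s : R) (p : point) : Prop :=
  a <= fst p <= a + s /\ b <= snd p <= b + s.

Definition in_open_square (a b s : R) (p : point) : Prop :=
  a < fst p < a + s /\ b < snd p < b + s.

Definition on_boundary (a b s : R) (p : point) : Prop :=
  in_closed_square a b s p /\ ~ in_open_square a b s p.

Definition witness_set (P W : list point) : Prop :=
  NoDup W /\ general_position (P ++ W) /\
  forall (a b s : R) (p q : point),
    0 < s -> In p P -> In q P -> p <> q ->
    on_boundary a b s p -> on_boundary a b s q ->
    exists w, In w W /\ in_open_square a b s w.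

Definition admissible (n : nat) (P : list point) : Prop :=
  NoDup P /\ length P = n /\ general_position P.

Definition is_stS_set (P : list point) (k : nat) : Prop :=
  (exists W, witness_set P W /\ length W = k) /\
  (forall W, witness_set P W -> (k <= length W)%nat).

Definition is_stS (n : nat) (k : nat) : Prop :=
  (exists P, admissible n P /\ is_stS_set P k) /\
  (forall P k', admissible n P -> is_stS_set P k' -> (k' <= k)%nat).

From Stdlib Require Import Reals List Lia Lra Arith Classical ClassicalEpsilon.
Import ListNotations.
Open Scope R_scope.

(* Upper bound: every square through two points p, q of P with q northeast of p is
   pierced by a point placed just northeast of p or just southwest of q.  Given an
   antichain N of the northeast order, put such a point southwest of every point lying
   above N and northeast of every other point outside N: at most n - |N| witnesses
   handle all northeast pairs, and likewise for southeast pairs.  By the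
   Erdos-Szekeres theorem P contains an antichain of one of the two orders of size
   ceil(sqrt n), giving 2n - sqrt n.
   Lower bound: two parallel staircases of n/2 points each admit about 5n/4
   interior-disjoint squares with two points on their boundary, each needing its own
   witness. *)

Definition filterP {A} (Q : A -> Prop) (l : list A) : list A :=
  filter (fun x => if excluded_middle_informative (Q x) then true else false) l.

Lemma filterP_In {A} (Q : A -> Prop) l x : In x (filterP Q l) <-> In x l /\ Q x.
Proof.
  unfold filterP; rewrite filter_In.
  destruct (excluded_middle_informative (Q x)); intuition discriminate.
Qed.

Lemma length_filterP_compl {A} (Q : A -> Prop) l :
  (length (filterP Q l) + length (filterP (fun x => ~ Q x) l) = length l)%nat.
Proof.
  unfold filterP; induction l as [|a l IH]; simpl; auto.
  destruct (excluded_middle_informative (Q a)), (excluded_middle_informative (~ Q a));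
    simpl; try tauto; lia.
Qed.

Section StrictOrder.
Context {A : Type} (R : A -> A -> Prop).
Hypothesis R_trans : forall x y z, R x y -> R y z -> R x z.
Hypothesis R_irrefl : forall x, ~ R x x.

Definition chain (C : list A) := forall u v, In u C -> In v C -> u <> v -> R u v \/ R v u.
Definition antichain (D : list A) := forall u v, In u D -> In v D -> ~ R u v.
Definition maximal_in (l : list A) (u : A) := forall v, In v l -> ~ R u v.

Lemma exists_maximal l : l <> [] -> exists u, In u l /\ maximal_in l u.
Proof.
  induction l as [|a l IH]; intros Hl; [congruence|].
  destruct l as [|b l].
  { exists a; split; [left; auto|]. intros v [<-|[]]; apply R_irrefl. }
  destruct IH as [m [Hm Hmax]]; [discriminate|].
  destruct (classic (R m a)) as [Hma|Hma].
  - exists a; split; [left; auto|].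
    intros v [<-|Hv] Hav; [exact (R_irrefl _ Hav)|exact (Hmax v Hv (R_trans _ _ _ Hma Hav))].
  - exists m; split; [right; auto|]. intros v [<-|Hv]; auto.
Qed.

Lemma chain_extend_maximal P C : C <> [] -> chain C ->
  (forall x, In x C -> In x P /\ ~ maximal_in P x) ->
  exists d, In d P /\ ~ In d C /\ chain (d :: C).
Proof.
  intros HC HCch HCP.
  destruct (exists_maximal C HC) as [c [Hc Hcmax]].
  assert (Hbelow_c : forall u, In u C -> u = c \/ R u c).
  { intros u Hu; destruct (classic (u = c)) as [|Hne]; auto.
    destruct (HCch u c Hu Hc Hne) as [|Hcu]; auto. contradiction (Hcmax u Hu). }
  set (Up := filterP (R c) P).
  destruct (exists_maximal Up) as [d [Hd Hdmax]].
  { destruct (HCP c Hc) as [_ Hc_not_max].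
    apply not_all_ex_not in Hc_not_max as [q Hq].
    apply imply_to_and in Hq as [HqP Hcq%NNPP].
    intros Hnil. assert (Hq : In q Up) by (apply filterP_In; auto).
    rewrite Hnil in Hq; contradiction. }
  apply filterP_In in Hd as [HdP Hcd].
  assert (Hd_max : maximal_in P d).
  { intros w Hw Hdw. apply (Hdmax w); auto. apply filterP_In; eauto. }
  exists d; repeat split; auto.
  - intros HdC; apply (proj2 (HCP d HdC)); auto.
  - intros u v [<-|Hu] [<-|Hv] Huv; try congruence;
      [right|left|auto];
      (destruct (Hbelow_c _ ltac:(eassumption)) as [->|]; eauto).
Qed.

(* Erdos-Szekeres for a strict order: peel off the maximal elements. *)
Lemma chain_or_antichain (a b : nat) : forall P, NoDup P -> (a * b < length P)%nat ->
  (exists C, NoDup C /\ incl C P /\ (a + 1 <= length C)%nat /\ chain C) \/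
  (exists D, NoDup D /\ incl D P /\ (b + 1 <= length D)%nat /\ antichain D).
Proof.
  induction a as [|a IH]; intros P HP Hlen.
  - left. destruct P as [|p P]; simpl in Hlen; [lia|].
    exists [p]; split; [repeat constructor; auto|]. split; [intros x [<-|[]]; left; auto|].
    split; [simpl; lia|]. intros u v [<-|[]] [<-|[]]; congruence.
  - set (M := filterP (maximal_in P) P).
    set (P' := filterP (fun p => ~ maximal_in P p) P).
    pose proof (length_filterP_compl (maximal_in P) P) as Hsplit; fold M P' in Hsplit.
    destruct (le_lt_dec (b + 1) (length M)) as [HM|HM].
    { right. exists M; repeat split.
      - apply NoDup_filter; auto.
      - intros x Hx; apply filterP_In in Hx; tauto.
      - auto.
      - intros u v Hu Hv; apply filterP_In in Hu; apply filterP_In in Hv.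
        apply (proj2 Hu); tauto. }
    destruct (IH P' (NoDup_filter _ HP)) as [[C [HC [HCP' [HCl HCch]]]]|[D [HD [HDP' [HDl HDa]]]]];
      [simpl in Hlen; nia| |].
    + left.
      assert (HCP : forall x, In x C -> In x P /\ ~ maximal_in P x)
        by (intros x Hx; apply (filterP_In (fun p => ~ maximal_in P p)), HCP'; auto).
      destruct (chain_extend_maximal P C) as [d [HdP [HdC Hch]]]; auto.
      { intros ->; simpl in HCl; lia. }
      exists (d :: C); repeat split; auto.
      * constructor; auto.
      * intros x [<-|Hx]; [auto|apply HCP; auto].
      * simpl; lia.
    + right. exists D; repeat split; auto.
      intros x Hx; apply (filterP_In (fun p => ~ maximal_in P p)), HDP'; auto.
Qed.

Lemma antichain_cover P N : NoDup N -> incl N P -> antichain N ->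
  exists A1 B1, incl A1 P /\ incl B1 P /\
    (length A1 + length B1 + length N <= length P)%nat /\
    forall p q, In p P -> In q P -> R p q -> In p A1 \/ In q B1.
Proof.
  intros HN HNP Hanti.
  set (above := fun q => exists m, In m N /\ R m q).
  set (B1 := filterP above P).
  set (rest := filterP (fun q => ~ above q) P).
  set (A1 := filterP (fun q => ~ In q N) rest).
  exists A1, B1; repeat split.
  - intros x Hx; apply filterP_In in Hx as [Hx _]; apply filterP_In in Hx; tauto.
  - intros x Hx; apply filterP_In in Hx; tauto.
  - assert (HNrest : (length N <= length (filterP (fun q => In q N) rest))%nat).
    { apply NoDup_incl_length; auto. intros x Hx.
      apply filterP_In; split; auto. apply filterP_In; split; auto.
      intros [m [Hm Hmx]]; exact (Hanti m x Hm Hx Hmx). }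
    pose proof (length_filterP_compl above P) as HP_split.
    pose proof (length_filterP_compl (fun q => In q N) rest) as Hrest_split.
    cbv beta in Hrest_split. fold B1 rest in HP_split. fold A1 in Hrest_split. lia.
  - intros p q Hp Hq Hpq.
    destruct (classic (above p)) as [[m [Hm Hmp]]|Hp_above].
    + right. apply filterP_In; split; auto. exists m; eauto.
    + destruct (classic (In p N)) as [HpN|HpN].
      * right. apply filterP_In; split; auto. exists p; auto.
      * left. apply filterP_In; split; auto. apply filterP_In; auto.
Qed.

End StrictOrder.

Definition northeast (p q : point) := fst p < fst q /\ snd p < snd q.
Definition southeast (p q : point) := fst p < fst q /\ snd q < snd p.

Lemma northeast_trans p q r : northeast p q -> northeast q r -> northeast p r.
Proof. unfold northeast; lra. Qed.
Lemma northeast_irrefl p : ~ northeast p p.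
Proof. unfold northeast; lra. Qed.
Lemma southeast_trans p q r : southeast p q -> southeast q r -> southeast p r.
Proof. unfold southeast; lra. Qed.
Lemma southeast_irrefl p : ~ southeast p p.
Proof. unfold southeast; lra. Qed.

Lemma chain_northeast_antichain_southeast C :
  chain northeast C -> antichain southeast C.
Proof.
  intros Hch u v Hu Hv Huv. destruct (classic (u = v)) as [<-|Hne].
  - exact (southeast_irrefl u Huv).
  - unfold northeast, southeast in *. destruct (Hch u v Hu Hv Hne); lra.
Qed.

Definition separated (g : R) (p q : point) :=
  (fst p + g <= fst q \/ fst q + g <= fst p) /\ (snd p + g <= snd q \/ snd q + g <= snd p).

Lemma positive_lower_bound {A} (f : A -> R) l :
  (forall x, In x l -> 0 < f x) -> exists g, 0 < g /\ forall x, In x l -> g <= f x.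
Proof.
  induction l as [|a l IH]; intros Hpos.
  - exists 1; split; [lra|intros x []].
  - destruct IH as [g [Hg Hle]]; [intros; apply Hpos; right; auto|].
    exists (Rmin g (f a)); split; [apply Rmin_pos; auto; apply Hpos; left; auto|].
    intros x [<-|Hx]; [apply Rmin_r|]. eapply Rle_trans; [apply Rmin_l|auto].
Qed.

Lemma separation_exists P : general_position P ->
  exists g, 0 < g /\ forall p q, In p P -> In q P -> p <> q -> separated g p q.
Proof.
  intros Hgp.
  set (gap := fun pq : point * point => let (p, q) := pq in
    if excluded_middle_informative (p = q) then 1
    else Rmin (Rabs (fst p - fst q)) (Rabs (snd p - snd q))).
  destruct (positive_lower_bound gap (list_prod P P)) as [g [Hg Hle]].
  { intros [p q] Hpq. apply in_prod_iff in Hpq as [Hp Hq]. simpl.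
    destruct (excluded_middle_informative (p = q)) as [|Hne]; [lra|].
    destruct (Hgp p q Hp Hq Hne) as [Hx Hy].
    apply Rmin_pos; apply Rabs_pos_lt; lra. }
  exists g; split; auto. intros p q Hp Hq Hne.
  specialize (Hle (p, q) (in_prod _ _ _ _ Hp Hq)). simpl in Hle.
  destruct (excluded_middle_informative (p = q)); [contradiction|].
  pose proof (Rmin_l (Rabs (fst p - fst q)) (Rabs (snd p - snd q))).
  pose proof (Rmin_r (Rabs (fst p - fst q)) (Rabs (snd p - snd q))).
  unfold separated, Rabs in *.
  destruct (Rcase_abs (fst p - fst q)), (Rcase_abs (snd p - snd q)); lra.
Qed.

Definition shift (o : R * R) (p : point) : point := (fst p + fst o, snd p + snd o).

(* The southeast offsets use 2e so that no two offsets share a coordinate. *)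
Definition offsets (e : R) : list (R * R) :=
  [(0, 0); (e, e); (-e, -e); (2 * e, -(2 * e)); (-(2 * e), 2 * e)].

Lemma offsets_spread e o1 o2 : 0 < e -> In o1 (offsets e) -> In o2 (offsets e) ->
  (o1 = o2 \/ fst o1 <> fst o2 /\ snd o1 <> snd o2) /\
  - (5 * e) < fst o1 - fst o2 < 5 * e /\ - (5 * e) < snd o1 - snd o2 < 5 * e.
Proof.
  intros He H1 H2.
  destruct H1 as [<-|[<-|[<-|[<-|[<-|[]]]]]]; destruct H2 as [<-|[<-|[<-|[<-|[<-|[]]]]]];
    simpl; (split; [first [left; reflexivity | right; split; lra] | lra]).
Qed.

Lemma general_position_shifts e P Q : 0 < e ->
  (forall p q, In p P -> In q P -> p <> q -> separated (5 * e) p q) ->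
  (forall x, In x Q -> exists o p, In o (offsets e) /\ In p P /\ x = shift o p) ->
  general_position Q.
Proof.
  intros He Hsep HQ x y Hx Hy Hxy.
  destruct (HQ x Hx) as [o1 [p1 [Ho1 [Hp1 ->]]]].
  destruct (HQ y Hy) as [o2 [p2 [Ho2 [Hp2 ->]]]].
  destruct (offsets_spread e o1 o2 He Ho1 Ho2) as [Ho [Hdx Hdy]]. unfold shift; simpl.
  destruct (classic (p1 = p2)) as [<-|Hne].
  - destruct Ho as [<-|[Hx1 Hy1]]; [contradiction|]. split; intro; [apply Hx1|apply Hy1]; lra.
  - destruct (Hsep p1 p2 Hp1 Hp2 Hne) as [[|] [|]]; split; lra.
Qed.

Lemma general_position_incl Q Q' : incl Q Q' -> general_position Q' -> general_position Q.
Proof. intros HQ Hgp p q Hp Hq; apply Hgp; auto. Qed.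

Definition between (p q w : point) :=
  (fst p < fst w < fst q \/ fst q < fst w < fst p) /\
  (snd p < snd w < snd q \/ snd q < snd w < snd p).

Lemma between_sym p q w : between p q w -> between q p w.
Proof. unfold between; tauto. Qed.

Lemma between_in_open_square a b s p q w :
  on_boundary a b s p -> on_boundary a b s q -> between p q w -> in_open_square a b s w.
Proof.
  unfold on_boundary, in_closed_square, in_open_square, between.
  intros [[Hp1 Hp2] _] [[Hq1 Hq2] _] [Hx Hy]. split; lra.
Qed.

Definition shift_witnesses (e : R) (A1 B1 A2 B2 : list point) : list point :=
  map (shift (e, e)) A1 ++ map (shift (-e, -e)) B1 ++
  map (shift (2 * e, -(2 * e))) A2 ++ map (shift (-(2 * e), 2 * e)) B2.

Lemma general_position_shift_witnesses e P A1 B1 A2 B2 : 0 < e ->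
  (forall p q, In p P -> In q P -> p <> q -> separated (5 * e) p q) ->
  incl A1 P -> incl B1 P -> incl A2 P -> incl B2 P ->
  general_position (P ++ shift_witnesses e A1 B1 A2 B2).
Proof.
  intros He Hsep HA1 HB1 HA2 HB2. apply (general_position_shifts e P); auto.
  intros x Hx. apply in_app_iff in Hx as [Hx|Hx].
  - exists (0, 0), x; repeat split; [simpl; auto|auto|].
    unfold shift; simpl; rewrite !Rplus_0_r; destruct x; auto.
  - unfold shift_witnesses in Hx. rewrite !in_app_iff in Hx.
    destruct Hx as [Hx|[Hx|[Hx|Hx]]]; apply in_map_iff in Hx as [p [<- Hp]];
      eexists; exists p; (split; [|split; [eauto|reflexivity]]); simpl; tauto.
Qed.

(* A northeast pair (p, q) is pierced just northeast of p if p is in A1 and just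
   southwest of q if q is in B1; southeast pairs likewise with A2, B2. *)
Lemma shift_witnesses_between e P A1 B1 A2 B2 : 0 < e ->
  (forall p q, In p P -> In q P -> p <> q -> separated (5 * e) p q) ->
  (forall p q, In p P -> In q P -> northeast p q -> In p A1 \/ In q B1) ->
  (forall p q, In p P -> In q P -> southeast p q -> In p A2 \/ In q B2) ->
  forall p q, In p P -> In q P -> p <> q ->
  exists w, In w (shift_witnesses e A1 B1 A2 B2) /\ between p q w.
Proof.
  intros He Hsep Hcov1 Hcov2.
  assert (Hleft_to_right : forall p q, In p P -> In q P -> fst p + 5 * e <= fst q ->
            snd p + 5 * e <= snd q \/ snd q + 5 * e <= snd p ->
            exists w, In w (shift_witnesses e A1 B1 A2 B2) /\ between p q w).
  { intros p q Hp Hq Hx [Hy|Hy]; unfold shift_witnesses.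
    - destruct (Hcov1 p q Hp Hq ltac:(unfold northeast; lra)) as [HpA|HqB].
      + exists (shift (e, e) p); split; [rewrite !in_app_iff; left; apply in_map; auto|].
        unfold between, shift; simpl; lra.
      + exists (shift (-e, -e) q); split; [rewrite !in_app_iff; right; left; apply in_map; auto|].
        unfold between, shift; simpl; lra.
    - destruct (Hcov2 p q Hp Hq ltac:(unfold southeast; lra)) as [HpA|HqB].
      + exists (shift (2 * e, -(2 * e)) p); split; [rewrite !in_app_iff; right; right; left; apply in_map; auto|].
        unfold between, shift; simpl; lra.
      + exists (shift (-(2 * e), 2 * e) q); split; [rewrite !in_app_iff; right; right; right; apply in_map; auto|].
        unfold between, shift; simpl; lra. }
  intros p q Hp Hq Hpq.
  destruct (Hsep p q Hp Hq Hpq) as [[Hx|Hx] Hy]; [apply Hleft_to_right; auto|].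
  destruct (Hleft_to_right q p) as [w [Hw Hb]]; auto; [tauto|].
  exists w; split; auto; apply between_sym; auto.
Qed.

Lemma witness_set_of_antichains n P N1 N2 : admissible n P ->
  NoDup N1 -> incl N1 P -> antichain northeast N1 ->
  NoDup N2 -> incl N2 P -> antichain southeast N2 ->
  exists W, witness_set P W /\ (length W + length N1 + length N2 <= 2 * n)%nat.
Proof.
  intros [_ [Hlen Hgp]] HN1 HN1P Ha1 HN2 HN2P Ha2.
  destruct (antichain_cover northeast northeast_trans P N1 HN1 HN1P Ha1)
    as [A1 [B1 [HA1 [HB1 [Hc1 Hcov1]]]]].
  destruct (antichain_cover southeast southeast_trans P N2 HN2 HN2P Ha2)
    as [A2 [B2 [HA2 [HB2 [Hc2 Hcov2]]]]].
  destruct (separation_exists P Hgp) as [g [Hg Hsep]].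
  set (e := g / 5). assert (He : 0 < e) by (unfold e; lra).
  assert (Hsep5 : forall p q, In p P -> In q P -> p <> q -> separated (5 * e) p q)
    by (unfold e; replace (5 * (g / 5)) with g by field; auto).
  set (W0 := shift_witnesses e A1 B1 A2 B2).
  set (W := nodup (fun x y : point => excluded_middle_informative (x = y)) W0).
  assert (HW : forall w, In w W <-> In w W0) by (intros; apply nodup_In).
  exists W; split; [split; [apply NoDup_nodup|split]|].
  - apply (general_position_incl _ (P ++ W0)).
    + intros x; rewrite !in_app_iff, HW; auto.
    + apply general_position_shift_witnesses; auto.
  - intros a b s p q _ Hp Hq Hpq Hbp Hbq.
    destruct (shift_witnesses_between e P A1 B1 A2 B2 He Hsep5 Hcov1 Hcov2 p q Hp Hq Hpq)
      as [w [Hw Hb]].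
    exists w; split; [apply HW; auto|].
    apply (between_in_open_square a b s p q); auto.
  - assert (length W <= length W0)%nat
      by (apply NoDup_incl_length; [apply NoDup_nodup|intros x; apply HW]).
    unfold W0, shift_witnesses in *; rewrite !length_app, !length_map in *. lia.
Qed.

Lemma witness_set_small n m P : admissible n P -> ((m - 1) * (m - 1) < n)%nat ->
  exists W, witness_set P W /\ (length W + m <= 2 * n)%nat.
Proof.
  intros HPadm Hm. pose proof HPadm as [HP [Hlen _]].
  destruct (chain_or_antichain northeast northeast_trans northeast_irrefl (m - 1) (m - 1) P HP)
    as [[C [HC [HCP [HCl HCch]]]]|[D [HD [HDP [HDl HDa]]]]]; [lia| |].
  - destruct (witness_set_of_antichains n P [] C HPadm (NoDup_nil _) (incl_nil_l _)
                (fun u v Hu => match Hu with end) HC HCP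
                (chain_northeast_antichain_southeast C HCch)) as [W [HW HWl]].
    exists W; split; auto. simpl in HWl; lia.
  - destruct (witness_set_of_antichains n P D [] HPadm HD HDP HDa (NoDup_nil _) (incl_nil_l _)
                (fun u v Hu => match Hu with end)) as [W [HW HWl]].
    exists W; split; auto. simpl in HWl; lia.
Qed.

Definition disjoint {A} (S T : A -> Prop) := forall x, S x -> T x -> False.

Lemma ForallOrdPairs_app {A} (Rel : A -> A -> Prop) l1 l2 :
  ForallOrdPairs Rel l1 -> ForallOrdPairs Rel l2 ->
  (forall a b, In a l1 -> In b l2 -> Rel a b) -> ForallOrdPairs Rel (l1 ++ l2).
Proof.
  induction l1 as [|a l1 IH]; intros H1 H2 H12; simpl; auto.
  inversion H1; subst. constructor.
  - apply Forall_app; split; auto. apply Forall_forall; intros; apply H12; simpl; auto.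
  - apply IH; auto. intros; apply H12; simpl; auto.
Qed.

Lemma ForallOrdPairs_map_seq {A} (Rel : A -> A -> Prop) (f : nat -> A) :
  (forall i j, (i < j)%nat -> Rel (f i) (f j)) -> forall k s, ForallOrdPairs Rel (map f (seq s k)).
Proof.
  intros Hf k. induction k as [|k IH]; intros s; simpl; constructor; auto.
  apply Forall_forall; intros x Hx. apply in_map_iff in Hx as [j [<- Hj]].
  apply in_seq in Hj. apply Hf; lia.
Qed.

Lemma length_le_of_disjoint_hits {A} (W : list A) (L : list (A -> Prop)) :
  ForallOrdPairs disjoint L -> (forall S, In S L -> exists w, In w W /\ S w) ->
  (length L <= length W)%nat.
Proof.
  intros Hdisj Hhit.
  assert (HV : exists V, NoDup V /\ incl V W /\ length V = length L /\
                 forall v, In v V -> exists S, In S L /\ S v).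
  { induction L as [|S L IH].
    - exists []; repeat split; auto; [constructor|intros x []|intros v []].
    - inversion Hdisj as [|? ? HS HL]; subst.
      destruct IH as [V [HV [HVW [HVl HVL]]]]; auto; [intros; apply Hhit; right; auto|].
      destruct (Hhit S (or_introl eq_refl)) as [w [Hw HSw]].
      exists (w :: V); repeat split.
      + constructor; auto. intros HwV. destruct (HVL w HwV) as [T [HT HTw]].
        exact (proj1 (Forall_forall _ _) HS T HT w HSw HTw).
      + intros x [<-|Hx]; auto.
      + simpl; auto.
      + intros v [<-|Hv]; [exists S; simpl; auto|].
        destruct (HVL v Hv) as [T [HT HTv]]; exists T; simpl; auto. }
  destruct HV as [V [HV [HVW [HVl _]]]]. rewrite <- HVl. apply NoDup_incl_length; auto.
Qed.

Definition lattice_point (x y : nat) : point := (INR x, INR y).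
Lemma lattice_point_inj x1 y1 x2 y2 :
  lattice_point x1 y1 = lattice_point x2 y2 -> x1 = x2 /\ y1 = y2.
Proof.
  intros E. pose proof (f_equal fst E) as Ex. pose proof (f_equal snd E) as Ey.
  split; apply INR_eq; auto.
Qed.

Definition lattice_square (a b s : nat) : point -> Prop := in_open_square (INR a) (INR b) (INR s).

Lemma lattice_squares_disjoint a1 b1 s1 a2 b2 s2 :
  (a1 + s1 <= a2 \/ a2 + s2 <= a1 \/ b1 + s1 <= b2 \/ b2 + s2 <= b1)%nat ->
  disjoint (lattice_square a1 b1 s1) (lattice_square a2 b2 s2).
Proof.
  unfold disjoint, lattice_square, in_open_square. intros H w H1 H2.
  destruct H as [H|[H|[H|H]]]; apply le_INR in H; rewrite plus_INR in H; lra.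
Qed.

Lemma lattice_corner_on_boundary a b s x y : (x = a \/ x = a + s)%nat -> (y = b \/ y = b + s)%nat ->
  on_boundary (INR a) (INR b) (INR s) (lattice_point x y).
Proof.
  unfold on_boundary, in_closed_square, in_open_square, lattice_point; simpl.
  pose proof (pos_INR s).
  intros [->| ->] [->| ->]; rewrite ?plus_INR; lra.
Qed.

(* Two diagonal staircases, above and below the main diagonal, offset by 3; with
   n = 4T + r there are n - 2T >= 2T upper points and 2T lower points. *)
Definition upper_point (a : nat) : point := lattice_point (2 * a) (2 * a + 3).
Definition lower_point (a : nat) : point := lattice_point (2 * a + 3) (2 * a).

Definition staircases (n : nat) : list point :=
  map upper_point (seq 0 (n - 2 * (n / 4))) ++ map lower_point (seq 0 (2 * (n / 4))).

Lemma staircases_admissible n : admissible n (staircases n).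
Proof.
  unfold staircases, upper_point, lower_point.
  pose proof (Nat.div_mod_eq n 4). pose proof (Nat.mod_upper_bound n 4).
  split; [|split].
  - apply NoDup_app.
    + apply NoDup_map_NoDup_ForallPairs; [|apply seq_NoDup].
      intros i j _ _ E. apply lattice_point_inj in E. lia.
    + apply NoDup_map_NoDup_ForallPairs; [|apply seq_NoDup].
      intros i j _ _ E. apply lattice_point_inj in E. lia.
    + intros p Hp Hq. apply in_map_iff in Hp as [i [<- _]]. apply in_map_iff in Hq as [j [E _]].
      apply lattice_point_inj in E. lia.
  - rewrite length_app, !length_map, !length_seq. lia.
  - intros p q Hp Hq Hpq. apply in_app_iff in Hp, Hq.
    destruct Hp as [Hp|Hp]; apply in_map_iff in Hp as [i [<- _]];
      destruct Hq as [Hq|Hq]; apply in_map_iff in Hq as [j [<- _]];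
      unfold lattice_point in *; cbn [fst snd];
      split; intros E; apply INR_eq in E;
      first [lia | apply Hpq; do 2 f_equal; lia].
Qed.

(* Interior-disjoint squares, each with two points of [staircases n] on its boundary:
   squares on consecutive upper points, on consecutive lower points, and squares with
   upper_point (2 j) and lower_point (2 j) at opposite corners. *)
Definition forced_squares (T : nat) : list (point -> Prop) :=
  map (fun c => lattice_square (2 * c) (2 * c + 3) 2) (seq 0 (2 * T - 1)) ++
  map (fun c => lattice_square (2 * c + 3) (2 * c) 2) (seq 0 (2 * T - 1)) ++
  map (fun j => lattice_square (4 * j) (4 * j) 3) (seq 0 T).

Lemma forced_squares_disjoint T : ForallOrdPairs disjoint (forced_squares T).
Proof.
  unfold forced_squares.
  repeat apply ForallOrdPairs_app;
    try (apply ForallOrdPairs_map_seq; intros i j Hij; apply lattice_squares_disjoint; lia);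
    intros S1 S2 H1 H2;
    repeat match goal with
           | H : In _ (_ ++ _) |- _ => apply in_app_iff in H
           | H : _ \/ _ |- _ => destruct H
           | H : In _ (map _ _) |- _ => apply in_map_iff in H as [? [<- _]]
           end;
    apply lattice_squares_disjoint; lia.
Qed.

Lemma forced_squares_hit n W : witness_set (staircases n) W ->
  forall S, In S (forced_squares (n / 4)) -> exists w, In w W /\ S w.
Proof.
  intros [_ [_ HW]] S HS.
  pose proof (Nat.div_mod_eq n 4). pose proof (Nat.mod_upper_bound n 4).
  assert (Hup : forall a, (a < 2 * (n / 4))%nat -> In (upper_point a) (staircases n))
    by (intros; apply in_or_app; left; apply in_map, in_seq; lia).
  assert (Hlow : forall a, (a < 2 * (n / 4))%nat -> In (lower_point a) (staircases n))
    by (intros; apply in_or_app; right; apply in_map, in_seq; lia).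
  unfold forced_squares in HS. rewrite !in_app_iff in HS.
  destruct HS as [HS|[HS|HS]]; apply in_map_iff in HS as [c [<- Hc]]; apply in_seq in Hc;
    unfold lattice_square.
  - apply (HW _ _ _ (upper_point c) (upper_point (S c)));
      [apply lt_0_INR; lia|apply Hup; lia|apply Hup; lia| | |].
    + intros E; apply lattice_point_inj in E; lia.
    + apply lattice_corner_on_boundary; lia.
    + apply lattice_corner_on_boundary; lia.
  - apply (HW _ _ _ (lower_point c) (lower_point (S c)));
      [apply lt_0_INR; lia|apply Hlow; lia|apply Hlow; lia| | |].
    + intros E; apply lattice_point_inj in E; lia.
    + apply lattice_corner_on_boundary; lia.
    + apply lattice_corner_on_boundary; lia.
  - apply (HW _ _ _ (upper_point (2 * c)) (lower_point (2 * c)));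
      [apply lt_0_INR; lia|apply Hup; lia|apply Hlow; lia| | |].
    + intros E; apply lattice_point_inj in E; lia.
    + apply lattice_corner_on_boundary; lia.
    + apply lattice_corner_on_boundary; lia.
Qed.

Lemma staircases_witness_lower_bound n W : witness_set (staircases n) W ->
  (5 * n <= 4 * length W + 23)%nat.
Proof.
  intros HW.
  pose proof (length_le_of_disjoint_hits W _ (forced_squares_disjoint (n / 4))
                (forced_squares_hit n W HW)) as Hcount.
  unfold forced_squares in Hcount. rewrite !length_app, !length_map, !length_seq in Hcount.
  pose proof (Nat.div_mod_eq n 4). pose proof (Nat.mod_upper_bound n 4). lia.
Qed.

Lemma nat_min_exists (Q : nat -> Prop) k : Q k -> exists m, Q m /\ forall j, Q j -> (m <= j)%nat.
Proof.
  intros Hk.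
  destruct (dec_inh_nat_subset_has_unique_least_element Q (fun j => classic (Q j)) (ex_intro _ k Hk))
    as [m [Hm _]].
  exists m; exact Hm.
Qed.

Lemma nat_max_exists (Q : nat -> Prop) U k : Q k -> (forall j, Q j -> (j <= U)%nat) ->
  exists m, Q m /\ forall j, Q j -> (j <= m)%nat.
Proof.
  intros Hk HU.
  destruct (nat_min_exists (fun j => Q (U - j)%nat) (U - k)) as [m [Hm Hmin]].
  { replace (U - (U - k))%nat with k by (specialize (HU k Hk); lia); auto. }
  exists (U - m)%nat; split; auto.
  intros j Hj. specialize (Hmin (U - j)%nat). specialize (HU j Hj).
  replace (U - (U - j))%nat with j in Hmin by lia. specialize (Hmin Hj). lia.
Qed.

Lemma stS_set_exists P W : witness_set P W -> exists k, is_stS_set P k.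
Proof.
  intros HW.
  destruct (nat_min_exists (fun j => exists W, witness_set P W /\ length W = j) (length W))
    as [k [Hk Hmin]]; [eauto|].
  exists k; split; auto. intros W' HW'. apply Hmin; eauto.
Qed.

Lemma stS_bounds n m : ((m - 1) * (m - 1) < n)%nat ->
  exists k, is_stS n k /\ (k + m <= 2 * n)%nat /\ (5 * n <= 4 * k + 23)%nat.
Proof.
  intros Hm.
  set (attained := fun j => exists P, admissible n P /\ is_stS_set P j).
  assert (Hattained_le : forall j, attained j -> (j + m <= 2 * n)%nat).
  { intros j [P [HP [_ Hmin]]].
    destruct (witness_set_small n m P HP Hm) as [W [HW HWl]].
    specialize (Hmin W HW). lia. }
  destruct (witness_set_small n m (staircases n) (staircases_admissible n) Hm) as [W0 [HW0 _]].
  destruct (stS_set_exists _ _ HW0) as [k0 Hk0].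
  assert (Hattained0 : attained k0) by (exists (staircases n); split; auto; apply staircases_admissible).
  destruct (nat_max_exists attained (2 * n) k0 Hattained0) as [k [Hk Hmax]].
  { intros j Hj; specialize (Hattained_le j Hj); lia. }
  exists k; split; [|split].
  - split; auto. intros P k' HP Hk'. apply Hmax. exists P; auto.
  - apply Hattained_le; auto.
  - destruct Hk0 as [[W [HW HWl]] _].
    pose proof (staircases_witness_lower_bound n W HW).
    pose proof (Hmax k0 Hattained0). lia.
Qed.

Theorem mainTheorem17 :
  exists c : R, 0 < c /\
    forall n : nat, (1 <= n)%nat ->
      exists k : nat, is_stS n k /\
        5 / 4 * INR n - c * sqrt (INR n) <= INR k /\
        INR k <= 2 * INR n - sqrt (INR n).
Proof.
  exists 6; split; [lra|]. intros n Hn.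
  set (m := Nat.sqrt_up n).
  destruct (Nat.sqrt_up_spec n ltac:(lia)) as [Hm_lt Hm_ge]; fold m in Hm_lt, Hm_ge.
  destruct (stS_bounds n m ltac:(rewrite <- Nat.sub_1_r in Hm_lt; exact Hm_lt))
    as [k [Hk [Hupper Hlower]]].
  exists k; split; auto.
  assert (Hsqrt_m : sqrt (INR n) <= INR m).
  { rewrite <- (sqrt_square (INR m)) by apply pos_INR.
    apply sqrt_le_1_alt. rewrite <- mult_INR. apply le_INR; auto. }
  assert (Hsqrt_1 : 1 <= sqrt (INR n))
    by (rewrite <- sqrt_1; apply sqrt_le_1_alt, (le_INR 1); auto).
  apply le_INR in Hupper, Hlower. rewrite plus_INR, mult_INR in Hupper.
  rewrite plus_INR, !mult_INR in Hlower.
  replace (INR 2) with 2 in Hupper by (simpl; lra).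
  replace (INR 4) with 4 in Hlower by (simpl; lra).
  replace (INR 5) with 5 in Hlower by (simpl; lra).
  replace (INR 23) with 23 in Hlower by (simpl; lra).
  lra.
Qed.
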